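(* Assume the chain $\{z_t\}$ described in the context is stationary with stationary distribution $\pi$. Let $N_0\ge1$ be an integer such that every entry of the $N_0$-step transition matrix $M^{(N_0)}$ of $\{z_t\}$ is positive. Let $\delta=\min_{i,j\in[Z]}M^{(N_0)}_{i,j}>0$. Let $f:\mathbb{H}^N\times\mathbb{B}^N\to\mathbb{B}^N$ be fixed, and let the loss satisfy $|l(f,z)|\le B$ for all $z$, for some constant $B>0$. For a sample $S=(z_1,\dots,z_T)$ of the chain, define $err_S^T(f)=\frac1T\sum_{t=1}^T l(f,z_t)$ and $err_\pi(f)=E_{z\sim\pi}\,l(f,z)$. Then for every $\epsilon>0$ and every $T>2BN_0/(Z\delta\epsilon)$, $$P\big(|err_S^T(f)-err_\pi(f)|\ge\epsilon\big)\le 2\exp\!\left(-\frac{Z^2\delta^2\,(T\epsilon-2BN_0/(Z\delta))^2}{2TB^2N_0^2}\right).$$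
   Context: $\{z_t\}$ is the Markov chain $z_t=(h_t,b_t,b_{t+1})$. It is a time-homogeneous, irreducible, aperiodic Markov chain on a finite state space of $Z$ states, identified with $[Z]=\{1,\dots,Z\}$, with transition matrix $M$. Here $h_t\in\mathbb{H}^N$ (joint feedback) and $b_t\in\mathbb{B}^N$ (joint behavior), with $\mathbb{H},\mathbb{B}$ finite. For a prediction function $f:\mathbb{H}^N\times\mathbb{B}^N\to\mathbb{B}^N$ and a state $z=(h,b,b')$, the loss is $l(f,z)=\ell(f(h,b),b')$ for a fixed loss function $\ell$ on $\mathbb{B}^N\times\mathbb{B}^N$; an example is the 0-1 loss $\mathbf 1[f(h,b)\ne b']$. *)

From mathcomp Require Import all_boot.
From Stdlib Require Import Reals.
Set Implicit Arguments. Unset Strict Implicit. Unset Printing Implicit Defensive.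

Local Open Scope R_scope.

Definition vecH (H : finType) (N : nat) := {ffun 'I_N -> H}.
Definition vecB (Bt : finType) (N : nat) := {ffun 'I_N -> Bt}.

Definition loss (H Bt : finType) (N : nat)
  (f : vecH H N -> vecB Bt N -> vecB Bt N) (ell : vecB Bt N -> vecB Bt N -> R)
  (z : vecH H N * vecB Bt N * vecB Bt N) : R :=
  let '(h, b, b') := z in ell (f h b) b'.

Definition stochastic (Z : nat) (M : 'I_Z -> 'I_Z -> R) : Prop :=
  (forall i j, 0 <= M i j) /\ (forall i, \big[Rplus/0]_(j < Z) M i j = 1).

Fixpoint Mpow (Z : nat) (M : 'I_Z -> 'I_Z -> R) (n : nat) : 'I_Z -> 'I_Z -> R :=
  match n with
  | O => fun i j => if i == j then 1 else 0
  | S n' => fun i j => \big[Rplus/0]_(k < Z) (Mpow M n' i k * M k j)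
  end.

Definition irreducible (Z : nat) (M : 'I_Z -> 'I_Z -> R) : Prop :=
  forall i j, exists n, 0 < Mpow M n i j.

Definition stationary_dist (Z : nat) (M : 'I_Z -> 'I_Z -> R) (pi : 'I_Z -> R) : Prop :=
  (forall i, 0 <= pi i) /\ \big[Rplus/0]_(i < Z) pi i = 1 /\
  (forall j, \big[Rplus/0]_(i < Z) (pi i * M i j) = pi j).

(* Probability of the sample path s = (z_1,...,z_T) (indexed by 'I_T) for the
   stationary chain started from pi:  pi(z_1) * prod_t M(z_t, z_{t+1}). *)
Definition path_prob (Z T : nat) (M : 'I_Z -> 'I_Z -> R) (pi : 'I_Z -> R)
  (s : {ffun 'I_T -> 'I_Z}) : R :=
  \big[Rmult/1]_(t : 'I_T | nat_of_ord t == 0%nat) pi (s t) *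
  \big[Rmult/1]_(t : 'I_T) \big[Rmult/1]_(u : 'I_T | nat_of_ord u == (nat_of_ord t).+1 :> nat)
      M (s t) (s u).

Definition prob (Z T : nat) (M : 'I_Z -> 'I_Z -> R) (pi : 'I_Z -> R)
  (E : {ffun 'I_T -> 'I_Z} -> bool) : R :=
  \big[Rplus/0]_(s : {ffun 'I_T -> 'I_Z}) (if E s then path_prob M pi s else 0).

Definition Rleb (x y : R) : bool := if Rle_dec x y then true else false.

Definition err_S (Z T : nat) (l : 'I_Z -> R) (s : {ffun 'I_T -> 'I_Z}) : R :=
  / INR T * \big[Rplus/0]_(t : 'I_T) l (s t).

Definition err_pi (Z : nat) (pi : 'I_Z -> R) (l : 'I_Z -> R) : R :=
  \big[Rplus/0]_(i < Z) (pi i * l i).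

From HB Require Import structures.
From Stdlib Require Import Reals Lra.
From Coquelicot Require Import Coquelicot.
From mathcomp Require Import all_boot.

Set Implicit Arguments. Unset Strict Implicit. Unset Printing Implicit Defensive.
Local Open Scope R_scope.

(* The centered sum sum_t l(z_t) - T err_pi(l) is a martingale in disguise: with the
   truncated solutions h_m = sum_(k <= m) M^k l of the Poisson equation, it splits into a
   head term centered under pi and increments h(z_(t+1)) - (M h)(z_t) centered under the
   transition law.  Doeblin's condition M^(N0) >= delta contracts oscillations by the factor
   1 - Z delta every N0 steps, so every h_m ranges in an interval of length
   rho = 2 B N0 / (Z delta).  Hoeffding's lemma then bounds each conditional moment
   generating function by exp(lam^2 rho^2 / 8); multiplying along the path and optimising a
   Chernoff bound gives 2 exp(-2 T eps^2 / rho^2), which implies the stated bound because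
   (T eps - rho)^2 <= (T eps)^2. *)

HB.instance Definition _ := Monoid.isComLaw.Build R 0 Rplus
  (fun x y z => esym (Rplus_assoc x y z)) Rplus_comm Rplus_0_l.
HB.instance Definition _ := Monoid.isComLaw.Build R 1 Rmult
  (fun x y z => esym (Rmult_assoc x y z)) Rmult_comm Rmult_1_l.
HB.instance Definition _ := Monoid.isMulLaw.Build R 0 Rmult Rmult_0_l Rmult_0_r.
HB.instance Definition _ :=
  Monoid.isAddLaw.Build R Rmult Rplus Rmult_plus_distr_r Rmult_plus_distr_l.

Lemma Rsum_le (I : Type) (r : seq I) (P : pred I) (F G : I -> R) :
  (forall i, P i -> F i <= G i) ->
  \big[Rplus/0]_(i <- r | P i) F i <= \big[Rplus/0]_(i <- r | P i) G i.
Proof. by move=> FG; apply: (big_ind2 (fun x y => x <= y)) => //; [lra | move=> *; lra]. Qed.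

Lemma Rprod_ge0 (I : Type) (r : seq I) (P : pred I) (F : I -> R) :
  (forall i, P i -> 0 <= F i) -> 0 <= \big[Rmult/1]_(i <- r | P i) F i.
Proof. by move=> F0; apply: (big_ind (fun x => 0 <= x)) => //; [lra | move=> *; nra]. Qed.

Lemma Rsum_const n c : \big[Rplus/0]_(j < n) c = INR n * c.
Proof.
elim: n => [|n IH]; first by rewrite big_ord0 /=; ring.
by rewrite big_ord_recr IH S_INR /=; ring.
Qed.

Lemma Rsum_opp (I : Type) (r : seq I) (F : I -> R) :
  \big[Rplus/0]_(i <- r) - F i = - \big[Rplus/0]_(i <- r) F i.
Proof. by rewrite (big_morph _ Ropp_plus_distr Ropp_0). Qed.

Lemma Rsum_sub (I : Type) (r : seq I) (F G : I -> R) :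
  \big[Rplus/0]_(i <- r) (F i - G i) =
  \big[Rplus/0]_(i <- r) F i - \big[Rplus/0]_(i <- r) G i.
Proof. by rewrite /Rminus big_split Rsum_opp. Qed.

Lemma Rsum_telescope (G : nat -> R) n :
  \big[Rplus/0]_(i < n) (G i.+1 - G i) = G n - G 0%N.
Proof.
elim: n => [|n IH]; first by rewrite big_ord0 /=; ring.
by rewrite big_ord_recr /= IH; ring.
Qed.

Lemma exp_le_exp x y : x <= y -> exp x <= exp y.
Proof. by case/Rle_lt_or_eq_dec => [/exp_increasing/Rlt_le | ->]; [| apply: Rle_refl]. Qed.

Lemma exp_pow x n : exp x ^ n = exp (INR n * x).
Proof.
elim: n => [|n IH]; first by rewrite /= Rmult_0_l exp_0.
by rewrite [exp x ^ n.+1]/= IH -exp_plus S_INR; congr exp; ring.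
Qed.

Definition band (I : Type) (g : I -> R) (a r : R) : Prop := forall i, a <= g i <= a + r.

Lemma band_of_Rabs_le (I : Type) (g : I -> R) B :
  (forall i, Rabs (g i) <= B) -> band g (- B) (2 * B).
Proof. by move=> gB i; have /Rabs_le_between := gB i; lra. Qed.

Lemma band_widen (I : Type) (g : I -> R) a r r' : band g a r -> r <= r' -> band g a r'.
Proof. by move=> gb rr' i; have := gb i; lra. Qed.

Lemma band_add (I : Type) (g h : I -> R) a r b s :
  band g a r -> band h b s -> band (fun i => g i + h i) (a + b) (r + s).
Proof. by move=> gb hb i; have := gb i; have := hb i; lra. Qed.

Lemma band_wsum (I : finType) (p X : I -> R) a r :
  (forall i, 0 <= p i) -> band X a r ->
  \big[Rplus/0]_i p i * a <= \big[Rplus/0]_i (p i * X i) <=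
  \big[Rplus/0]_i p i * (a + r).
Proof.
move=> p0 Xb; rewrite !big_distrl /=.
by split; apply: Rsum_le => i _; have := Xb i; have := p0 i; nra.
Qed.

Lemma exp_le_chord lam a b x : a <= x <= b ->
  exp (lam * x) * (b - a) <= (b - x) * exp (lam * a) + (x - a) * exp (lam * b).
Proof.
move=> xab.
have Ea : exp (lam * a) = exp (lam * x) * exp (lam * (a - x)).
  by rewrite -exp_plus; congr exp; ring.
have Eb : exp (lam * b) = exp (lam * x) * exp (lam * (b - x)).
  by rewrite -exp_plus; congr exp; ring.
have Ha := exp_ineq1_le (lam * (a - x)).
have Hb := exp_ineq1_le (lam * (b - x)).
have ex0 := exp_pos (lam * x).
rewrite Ea Eb.
have tangent : b - a <= (b - x) * exp (lam * (a - x)) + (x - a) * exp (lam * (b - x)).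
  have -> : b - a = (b - x) * (1 + lam * (a - x)) + (x - a) * (1 + lam * (b - x)) by ring.
  by apply: Rplus_le_compat; apply: Rmult_le_compat_l; lra.
nra.
Qed.

Lemma is_derive_nonpos_le0 (f df : R -> R) :
  (forall x, 0 <= x -> is_derive f x (df x)) -> (forall x, 0 <= x -> df x <= 0) ->
  forall u, 0 <= u -> f u <= f 0.
Proof.
move=> f_df df_le0 u u0.
case: (Req_dec u 0) => [->|un0]; first lra.
have [c [fuc cu]] : exists c, f u - f 0 = df c * (u - 0) /\ 0 < c < u.
  apply: MVT_cor2; first lra.
  by move=> c c0u; apply/is_derive_Reals; apply: f_df; lra.
have := df_le0 c (ltac:(lra)); nra.
Qed.

Definition bernoulli_mgf th u := 1 - th + th * exp u.

Lemma bernoulli_mgf_gt0 th u : 0 <= th <= 1 -> 0 < bernoulli_mgf th u.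
Proof.
rewrite /bernoulli_mgf => th01; have := exp_pos u.
by case: (Rle_lt_dec (exp u) 1) => ?; nra.
Qed.

(* The derivative of the left-hand side is the variance th'(1 - th') <= 1/4 of a
   Bernoulli variable with tilted parameter th'. *)
Lemma bernoulli_tilt_le th u : 0 <= th <= 1 -> 0 <= u ->
  th * exp u / bernoulli_mgf th u <= th + u / 4.
Proof.
move=> th01 u0.
set q := fun x => th * exp x / bernoulli_mgf th x - x / 4.
suff : q u <= q 0.
  by rewrite /q /bernoulli_mgf exp_0 Rmult_1_r (_ : 1 - th + th = 1); [lra | ring].
apply: (is_derive_nonpos_le0
  (df := fun x => th * exp x * (1 - th) / bernoulli_mgf th x ^ 2 - 1 / 4)) => // x x0.
all: have D0 := bernoulli_mgf_gt0 x th01; rewrite /q; rewrite /bernoulli_mgf in D0 *.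
- by auto_derive; [lra | field; lra].
- apply: Rle_minus; apply: (Rmult_le_reg_r ((1 - th + th * exp x) ^ 2)); first nra.
  rewrite /Rdiv Rmult_assoc Rinv_l; last nra.
  have := pow2_ge_0 ((1 - th) - th * exp x); have := exp_pos x; nra.
Qed.

Lemma bernoulli_mgf_centered_le th u : 0 <= th <= 1 -> 0 <= u ->
  bernoulli_mgf th u * exp (- th * u) <= exp (u ^ 2 / 8).
Proof.
move=> th01 u0.
set g := fun x => bernoulli_mgf th x * exp (- th * x - x ^ 2 / 8).
have : g u <= g 0.
  apply: (is_derive_nonpos_le0 (df := fun x => exp (- th * x - x ^ 2 / 8) *
     (th * exp x - bernoulli_mgf th x * (th + x / 4)))) => // x x0.
  - rewrite /g /bernoulli_mgf; auto_derive => //.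
    by rewrite (_ : - th * x + - (x * (x * 1) * / 8) = - th * x - x ^ 2 / 8); field.
  - have D0 := bernoulli_mgf_gt0 x th01.
    have tilt := bernoulli_tilt_le th01 x0.
    have : th * exp x <= bernoulli_mgf th x * (th + x / 4).
      have -> : th * exp x = th * exp x / bernoulli_mgf th x * bernoulli_mgf th x.
        by field; lra.
      nra.
    have := exp_pos (- th * x - x ^ 2 / 8); nra.
rewrite /g /bernoulli_mgf exp_0 Rmult_1_r.
have -> : - th * 0 - 0 ^ 2 / 8 = 0 by field.
rewrite exp_0 Rmult_1_r.
have -> : exp (- th * u) = exp (- th * u - u ^ 2 / 8) * exp (u ^ 2 / 8).
  by rewrite -exp_plus; congr exp; field.
have := exp_pos (u ^ 2 / 8); nra.
Qed.

Lemma wmean_exp_le_chord (I : finType) (p X : I -> R) a r lam :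
  (forall i, 0 <= p i) -> \big[Rplus/0]_i p i = 1 -> \big[Rplus/0]_i (p i * X i) = 0 ->
  band X a r -> 0 < r ->
  \big[Rplus/0]_i (p i * exp (lam * X i)) <=
  ((a + r) * exp (lam * a) - a * exp (lam * (a + r))) / r.
Proof.
move=> p0 p1 mean0 Xb r0; set b := a + r.
set chord := fun x => ((b - x) * exp (lam * a) + (x - a) * exp (lam * b)) / r.
apply: (Rle_trans _ (\big[Rplus/0]_i (p i * chord (X i)))).
  apply: Rsum_le => i _; apply: Rmult_le_compat_l; first exact: p0.
  apply: (Rmult_le_reg_r r) => //; rewrite /chord /Rdiv Rmult_assoc Rinv_l; last lra.
  rewrite Rmult_1_r -[r in _ * r](_ : b - a = r); last by rewrite /b; ring.
  by apply: exp_le_chord; have := Xb i; rewrite /b; lra.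
apply: Req_le.
have -> : \big[Rplus/0]_i (p i * chord (X i)) =
  \big[Rplus/0]_i (p i * ((b * exp (lam * a) - a * exp (lam * b)) / r) +
                   p i * X i * ((exp (lam * b) - exp (lam * a)) / r)).
  by apply: eq_bigr => i _; rewrite /chord; field; lra.
by rewrite big_split /= -!big_distrl /= p1 mean0; ring.
Qed.

Lemma hoeffding_lemma (I : finType) (p X : I -> R) a r lam :
  (forall i, 0 <= p i) -> \big[Rplus/0]_i p i = 1 -> \big[Rplus/0]_i (p i * X i) = 0 ->
  band X a r -> 0 <= lam ->
  \big[Rplus/0]_i (p i * exp (lam * X i)) <= exp (lam ^ 2 * r ^ 2 / 8).
Proof.
move=> p0 p1 mean0 Xb lam0.
have := band_wsum p0 Xb; rewrite p1 mean0 !Rmult_1_l => a0r.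
have [r0 | r0] : 0 < r \/ r = 0 by lra.
- apply: (Rle_trans _ _ _ (wmean_exp_le_chord lam p0 p1 mean0 Xb r0)).
  have th01 : 0 <= - a / r <= 1.
    by split; [apply: Rmult_le_pos; [lra | apply/Rlt_le/Rinv_0_lt_compat] |
               apply: (Rmult_le_reg_r r); rewrite // /Rdiv Rmult_assoc Rinv_l; lra].
  have := bernoulli_mgf_centered_le th01 (ltac:(nra) : 0 <= lam * r).
  have -> : (lam * r) ^ 2 / 8 = lam ^ 2 * r ^ 2 / 8 by field.
  have -> : lam * (a + r) = - (- a / r) * (lam * r) + lam * r by field; lra.
  have -> : lam * a = - (- a / r) * (lam * r) by field; lra.
  by rewrite /bernoulli_mgf exp_plus; apply: Rle_trans; apply: Req_le; field; lra.
- subst r; have X0 i : X i = 0 by have := Xb i; lra.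
  under eq_bigr => i _ do rewrite X0 Rmult_0_r exp_0 Rmult_1_r.
  by rewrite p1 -[1]exp_0; apply: exp_le_exp; lra.
Qed.

Lemma hoeffding_centered (I : finType) (p g : I -> R) a r lam :
  (forall i, 0 <= p i) -> \big[Rplus/0]_i p i = 1 -> band g a r -> 0 <= lam ->
  \big[Rplus/0]_i (p i * exp (lam * (g i - \big[Rplus/0]_j (p j * g j)))) <=
  exp (lam ^ 2 * r ^ 2 / 8).
Proof.
move=> p0 p1 gb lam0; set m := \big[Rplus/0]_j (p j * g j).
apply: (hoeffding_lemma (a := a - m)) => // [|i]; last by have := gb i; lra.
rewrite (eq_bigr (fun i => p i * g i - m * p i)); last by move=> i _; ring.
by rewrite Rsum_sub -big_distrr /= p1 /m; ring.
Qed.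

Lemma chernoff_le (I : finType) (w Y : I -> R) t lam :
  (forall i, 0 <= w i) -> 0 <= lam ->
  \big[Rplus/0]_i (if Rleb t (Y i) then w i else 0) <=
  exp (- (lam * t)) * \big[Rplus/0]_i (w i * exp (lam * Y i)).
Proof.
move=> w0 lam0; rewrite big_distrr /=; apply: Rsum_le => i _.
have := exp_pos (lam * Y i); have := exp_pos (- (lam * t)); have := w0 i.
rewrite /Rleb; case: Rle_dec => [tY|nY] /= wi0 e1 e2.
- have : 1 <= exp (- (lam * t)) * exp (lam * Y i).
    by rewrite -exp_plus -exp_0; apply: exp_le_exp; nra.
  nra.
- by apply: Rmult_le_pos; [|apply: Rmult_le_pos]; lra.
Qed.

Lemma Rsum_abs_event_le (I : finType) (w Y : I -> R) e :
  (forall i, 0 <= w i) ->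
  \big[Rplus/0]_i (if Rleb e (Rabs (Y i)) then w i else 0) <=
  \big[Rplus/0]_i (if Rleb e (Y i) then w i else 0) +
  \big[Rplus/0]_i (if Rleb e (- Y i) then w i else 0).
Proof.
move=> w0; rewrite -big_split /=; apply: Rsum_le => i _; have := w0 i.
rewrite /Rleb; do 3!case: Rle_dec => ? /=; try lra.
by move: (Rcase_abs (Y i)) => [/Rabs_left | /Rge_le/Rabs_pos_eq] ?; lra.
Qed.

Lemma err_S_opp Z T (g : 'I_Z -> R) (s : {ffun 'I_T -> 'I_Z}) :
  err_S (fun z => - g z) s = - err_S g s.
Proof. by rewrite /err_S Rsum_opp Ropp_mult_distr_r. Qed.

Lemma err_pi_opp Z (pi g : 'I_Z -> R) : err_pi pi (fun z => - g z) = - err_pi pi g.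
Proof. by rewrite /err_pi -Rsum_opp; apply: eq_bigr => i _; ring. Qed.

Definition path_snoc (Z n : nat) (p : {ffun 'I_n.+1 -> 'I_Z} * 'I_Z) :
  {ffun 'I_n.+2 -> 'I_Z} :=
  [ffun j : 'I_n.+2 => if (j < n.+1)%N then p.1 (inord j) else p.2].

Definition path_unsnoc (Z n : nat) (s : {ffun 'I_n.+2 -> 'I_Z}) :
  {ffun 'I_n.+1 -> 'I_Z} * 'I_Z :=
  ([ffun i : 'I_n.+1 => s (inord i)], s (inord n.+1)).

Lemma path_snoc_inord Z n (g : {ffun 'I_n.+1 -> 'I_Z}) x k :
  (k < n.+1)%N -> path_snoc (g, x) (inord k) = g (inord k).
Proof. by move=> kn; rewrite ffunE /= inordK ?kn //; apply: ltnW. Qed.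

Lemma path_snoc_last Z n (g : {ffun 'I_n.+1 -> 'I_Z}) x : path_snoc (g, x) (inord n.+1) = x.
Proof. by rewrite ffunE /= inordK // ltnn. Qed.

Lemma path_snocK Z n : cancel (@path_unsnoc Z n) (@path_snoc Z n).
Proof.
move=> s; apply/ffunP => j; rewrite ffunE /=; case: ifP => jn.
  by rewrite ffunE; congr (s _); apply: val_inj; rewrite /= !inordK // ltnW.
congr (s _); apply: val_inj; rewrite /= inordK //.
have := ltn_ord j; move: jn; rewrite ltnS => /negbT; rewrite -ltnNge => nj jn2.
by apply/eqP; rewrite eqn_leq nj -ltnS jn2.
Qed.

Lemma path_unsnocK Z n : cancel (@path_snoc Z n) (@path_unsnoc Z n).
Proof.
move=> [g x]; rewrite /path_unsnoc path_snoc_last; congr pair.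
by apply/ffunP => i; rewrite ffunE path_snoc_inord // inord_val.
Qed.

Lemma sum_path_snoc Z n (F : {ffun 'I_n.+2 -> 'I_Z} -> R) :
  \big[Rplus/0]_s F s =
  \big[Rplus/0]_(g : {ffun 'I_n.+1 -> 'I_Z}) \big[Rplus/0]_(x < Z) F (path_snoc (g, x)).
Proof.
rewrite (reindex (@path_snoc Z n)) /=; last first.
  by exists (@path_unsnoc Z n) => [p _ | s _]; [rewrite path_unsnocK | rewrite path_snocK].
by rewrite pair_big /=; apply: eq_bigr => -[g x].
Qed.

Definition path_weight (Z n : nat) (a : 'I_Z -> R) (K : nat -> 'I_Z -> 'I_Z -> R)
  (s : {ffun 'I_n.+1 -> 'I_Z}) : R :=
  a (s ord0) * \big[Rmult/1]_(i < n) K i (s (inord i)) (s (inord i.+1)).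

Lemma path_weight_ge0 Z n a (K : nat -> 'I_Z -> 'I_Z -> R) (s : {ffun 'I_n.+1 -> 'I_Z}) :
  (forall x, 0 <= a x) -> (forall t x y, 0 <= K t x y) -> 0 <= path_weight a K s.
Proof. by move=> a0 K0; apply: Rmult_le_pos => //; apply: Rprod_ge0. Qed.

Lemma path_weight_mul Z n a b (K L : nat -> 'I_Z -> 'I_Z -> R) (s : {ffun 'I_n.+1 -> 'I_Z}) :
  path_weight a K s * path_weight b L s =
  path_weight (fun x => a x * b x) (fun t x y => K t x y * L t x y) s.
Proof. by rewrite /path_weight big_split /=; ring. Qed.

Lemma path_weight_snoc Z n a (K : nat -> 'I_Z -> 'I_Z -> R)
    (g : {ffun 'I_n.+1 -> 'I_Z}) x :
  path_weight a K (path_snoc (g, x)) = path_weight a K g * K n (g (inord n)) x.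
Proof.
rewrite /path_weight big_ord_recr /= path_snoc_last path_snoc_inord //.
have -> : (ord0 : 'I_n.+2) = inord 0 by apply: val_inj; rewrite /= inordK.
rewrite path_snoc_inord // (_ : inord 0 = ord0); last by apply: val_inj; rewrite /= inordK.
rewrite -!Rmult_assoc; congr (_ * _ * _); apply: eq_bigr => i _.
by have i_lt := ltn_ord i; rewrite !path_snoc_inord // ltnW.
Qed.

(* The tower property: summing out the last coordinate costs at most a factor [C]. *)
Lemma sum_path_weight_le Z n a (K : nat -> 'I_Z -> 'I_Z -> R) A C :
  (forall x, 0 <= a x) -> (forall t x y, 0 <= K t x y) ->
  \big[Rplus/0]_(x < Z) a x <= A -> (forall t x, \big[Rplus/0]_(y < Z) K t x y <= C) ->
  0 <= C -> \big[Rplus/0]_(s : {ffun 'I_n.+1 -> 'I_Z}) path_weight a K s <= A * C ^ n.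
Proof.
move=> a0 K0 aA KC C0; elim: n => [|n IH].
  rewrite (reindex (fun x : 'I_Z => [ffun _ : 'I_1 => x])) /=; last first.
    exists (fun s : {ffun 'I_1 -> 'I_Z} => s ord0) => [x _ | s _]; first by rewrite ffunE.
    by apply/ffunP => i; rewrite ffunE ord1.
  rewrite Rmult_1_r; apply: (Rle_trans _ _ _ _ aA); apply: Req_le.
  by apply: eq_bigr => x _; rewrite /path_weight big_ord0 ffunE Rmult_1_r.
rewrite sum_path_snoc.
under eq_bigr => g _ do under eq_bigr => x _ do rewrite path_weight_snoc.
apply: (Rle_trans _ (\big[Rplus/0]_(g : {ffun 'I_n.+1 -> 'I_Z}) (path_weight a K g * C))).
  apply: Rsum_le => g _; rewrite -big_distrr /=; apply: Rmult_le_compat_l => //.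
  exact: path_weight_ge0.
rewrite -big_distrl /= (Rmult_comm C) -Rmult_assoc.
by apply: Rmult_le_compat_r.
Qed.

Lemma path_prob_weight Z n (M : 'I_Z -> 'I_Z -> R) pi (s : {ffun 'I_n.+1 -> 'I_Z}) :
  path_prob M pi s = path_weight pi (fun _ => M) s.
Proof.
rewrite /path_prob /path_weight; congr Rmult.
  by rewrite (big_pred1 ord0) // => t; rewrite /= -[t == ord0]/(val t == 0%N).
rewrite big_ord_recr /= [X in _ * X]big_pred0; last first.
  by move=> u; apply/negbTE; rewrite neq_ltn; apply/orP; left; exact: ltn_ord.
rewrite Rmult_1_r; apply: eq_bigr => i _.
rewrite (big_pred1 (inord i.+1)); last first.
  by move=> u /=; rewrite -val_eqE /= inordK // ltnS; exact: ltn_ord.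
by congr (M (s _) _); apply: val_inj; rewrite /= inordK //; exact: ltnW (ltn_ord i).
Qed.

Definition Mact (Z : nat) (M : 'I_Z -> 'I_Z -> R) (g : 'I_Z -> R) (i : 'I_Z) : R :=
  \big[Rplus/0]_(j < Z) (M i j * g j).

Lemma Mact_Mpow Z (M : 'I_Z -> 'I_Z -> R) n g i :
  Mact (Mpow M n) g i = iter n (Mact M) g i.
Proof.
elim: n g i => [|n IH] g i.
  rewrite /Mact /= (bigD1 i) //= eqxx big1 /=; first ring.
  by move=> j /negbTE; rewrite eq_sym => ->; ring.
rewrite iterSr -IH /Mact /=.
under eq_bigr => j _ do rewrite big_distrl /=.
rewrite exchange_big /=; apply: eq_bigr => k _.
by rewrite big_distrr /=; apply: eq_bigr => j _ /=; ring.
Qed.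

Lemma Mact_sum Z (M : 'I_Z -> 'I_Z -> R) k (F : nat -> 'I_Z -> R) x :
  Mact M (fun y => \big[Rplus/0]_(n < k) F n y) x = \big[Rplus/0]_(n < k) Mact M (F n) x.
Proof. by rewrite /Mact; under eq_bigr => j _ do rewrite big_distrr; rewrite exchange_big. Qed.

(* Doeblin's contraction: the part [delta] of every row of [P] is common to all rows,
   so only the remaining mass [1 - Z delta] transports the oscillation of [g]. *)
Lemma band_Mact_doeblin Z (P : 'I_Z -> 'I_Z -> R) delta g a r :
  (forall i, \big[Rplus/0]_(j < Z) P i j = 1) -> (forall i j, delta <= P i j) ->
  band g a r -> exists a', band (Mact P g) a' ((1 - INR Z * delta) * r).
Proof.
move=> P1 Pd gb; exists (a * (1 - INR Z * delta) + delta * \big[Rplus/0]_(j < Z) g j) => i.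
have split_delta : Mact P g i =
    \big[Rplus/0]_(j < Z) ((P i j - delta) * g j) + delta * \big[Rplus/0]_(j < Z) g j.
  by rewrite /Mact big_distrr -big_split /=; apply: eq_bigr => j _ /=; ring.
have mass : \big[Rplus/0]_(j < Z) (P i j - delta) = 1 - INR Z * delta.
  by rewrite Rsum_sub P1 Rsum_const.
have wsum : (1 - INR Z * delta) * a <= \big[Rplus/0]_(j < Z) ((P i j - delta) * g j) <=
            (1 - INR Z * delta) * (a + r).
  by rewrite -mass; apply: band_wsum => // j; have := Pd i j; lra.
rewrite split_delta; lra.
Qed.

Lemma Rsum_pow_div_le (rho : R) (N0 K : nat) : (1 <= N0)%N -> 0 <= rho < 1 ->
  \big[Rplus/0]_(n < K) rho ^ (n %/ N0) <= INR N0 / (1 - rho).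
Proof.
move=> N0_gt0 rho01.
have N0R : 1 <= INR N0 by apply: (le_INR 1); apply/leP.
have period : INR N0 / (1 - rho) = INR N0 + rho * (INR N0 / (1 - rho)) by field; lra.
have N0_le : INR N0 <= INR N0 / (1 - rho).
  have : 0 <= rho * (INR N0 / (1 - rho)).
    by apply: Rmult_le_pos; [lra | apply: Rdiv_le_0_compat; lra].
  rewrite {2}period; lra.
elim/ltn_ind: K => K IH; case: (ltnP K N0) => KN0.
  apply: (Rle_trans _ _ _ _ N0_le); apply: (Rle_trans _ (\big[Rplus/0]_(n < K) 1)).
    by apply: Rsum_le => n _; rewrite -(pow1 (n %/ N0)); apply: pow_incr; lra.
  by rewrite Rsum_const Rmult_1_r; apply/le_INR/leP/ltnW.
rewrite -(subnKC KN0) big_split_ord /=.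
have head : \big[Rplus/0]_(i < N0) rho ^ (lshift (K - N0) i %/ N0) = INR N0.
  by rewrite -[INR N0]Rmult_1_r -Rsum_const; apply: eq_bigr => i _ /=; rewrite divn_small.
have tail : \big[Rplus/0]_(i < K - N0) rho ^ (rshift N0 i %/ N0) =
            rho * \big[Rplus/0]_(i < K - N0) rho ^ (i %/ N0).
  by rewrite big_distrr /=; apply: eq_bigr => i _ /=; rewrite divnDl // divnn N0_gt0 add1n.
have IH' := IH (K - N0)%N (ltac:(by rewrite ltn_subrL N0_gt0 (leq_trans N0_gt0 KN0))).
rewrite head tail {1}period; apply: Rplus_le_compat_l; apply: Rmult_le_compat_l; lra.
Qed.

Definition Msum (Z : nat) (M : 'I_Z -> 'I_Z -> R) (m : nat) (g : 'I_Z -> R) (x : 'I_Z) : R :=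
  \big[Rplus/0]_(n < m.+1) iter n (Mact M) g x.

Lemma Msum0 Z (M : 'I_Z -> 'I_Z -> R) g x : Msum M 0 g x = g x.
Proof. by rewrite /Msum big_ord1. Qed.

Lemma MsumS Z (M : 'I_Z -> 'I_Z -> R) m g x :
  Msum M m.+1 g x = g x + Mact M (Msum M m g) x.
Proof. by rewrite /Msum big_ord_recl Mact_sum; congr Rplus. Qed.

Section MarkovChain.

Variables (Z : nat) (M : 'I_Z -> 'I_Z -> R).
Hypothesis HM : stochastic M.

Lemma Mact_const c i : Mact M (fun _ => c) i = c.
Proof. by rewrite /Mact -big_distrl /= (proj2 HM i) Rmult_1_l. Qed.

Lemma Mpow_row_sum n i : \big[Rplus/0]_(j < Z) Mpow M n i j = 1.
Proof.
rewrite (eq_bigr (fun j => Mpow M n i j * 1)) => [|j _]; last by rewrite Rmult_1_r.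
rewrite -/(Mact (Mpow M n) (fun _ => 1) i) Mact_Mpow; elim: n i => [//|n IH] i /=.
rewrite /Mact (eq_bigr (fun j => M i j * 1)) => [|j _]; last by rewrite IH.
exact: Mact_const.
Qed.

Lemma band_iter_Mact n g a r : band g a r -> band (iter n (Mact M) g) a r.
Proof.
move=> gb; elim: n => //= n IH i.
have : 1 * a <= Mact M (iter n (Mact M) g) i <= 1 * (a + r).
  by rewrite -(proj2 HM i); apply: band_wsum => // j; apply: (proj1 HM).
lra.
Qed.

Variables (N0 : nat) (delta : R).
Hypotheses (N0_gt0 : (1 <= N0)%N) (Mpow_ge : forall i j, delta <= Mpow M N0 i j).

Lemma Z_delta_le1 (i : 'I_Z) : INR Z * delta <= 1.
Proof.
rewrite -(Mpow_row_sum N0 i) -Rsum_const.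
by apply: Rsum_le => j _; apply: Mpow_ge.
Qed.

Lemma band_iter_Mact_decay n g a r : band g a r ->
  exists a', band (iter n (Mact M) g) a' (r * (1 - INR Z * delta) ^ (n %/ N0)).
Proof.
move=> gb; elim/ltn_ind: n => n IH; case: (ltnP n N0) => nN0.
  by exists a; rewrite divn_small //= Rmult_1_r; apply: band_iter_Mact.
have nE : n = (N0 + (n - N0))%N by rewrite subnKC.
have [a' b'] := IH (n - N0)%N (ltac:(by rewrite ltn_subrL N0_gt0 (leq_trans N0_gt0 nN0))).
have [a'' b''] := band_Mact_doeblin (Mpow_row_sum N0) Mpow_ge b'.
exists a''; move=> i; rewrite nE iterD -Mact_Mpow.
by rewrite divnDl // divnn N0_gt0 add1n /=; have := b'' i; lra.
Qed.

Hypotheses (Zdelta_gt0 : 0 < INR Z * delta) (Zdelta_le1 : INR Z * delta <= 1).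

Lemma band_Msum m g a r : 0 <= r -> band g a r ->
  exists a', band (Msum M m g) a' (r * INR N0 / (INR Z * delta)).
Proof.
move=> r0 gb.
suff [a' b'] : exists a', band (Msum M m g) a'
    (r * \big[Rplus/0]_(n < m.+1) (1 - INR Z * delta) ^ (n %/ N0)).
  exists a'; apply: (band_widen b'); rewrite /Rdiv Rmult_assoc; apply: Rmult_le_compat_l => //.
  have := @Rsum_pow_div_le (1 - INR Z * delta) N0 m.+1 N0_gt0 (ltac:(lra)).
  by rewrite (_ : 1 - (1 - INR Z * delta) = INR Z * delta) //; ring.
elim: m => [|m [a' b']].
  have [a0 b0] := band_iter_Mact_decay 0 gb.
  by exists a0 => i; rewrite Msum0 big_ord1 /=; apply: b0.
have [a1 b1] := band_iter_Mact_decay m.+1 gb.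
exists (a' + a1) => i; have := band_add b' b1 i.
by rewrite /Msum !big_ord_recr /=; lra.
Qed.

Variable pi : 'I_Z -> R.
Hypothesis Hpi : stationary_dist M pi.

Lemma path_prob_ge0 n (s : {ffun 'I_n.+1 -> 'I_Z}) : 0 <= path_prob M pi s.
Proof.
rewrite path_prob_weight; apply: path_weight_ge0 => [|_]; [exact: (proj1 Hpi) | exact: (proj1 HM)].
Qed.

Lemma err_pi_Mact g : err_pi pi (Mact M g) = err_pi pi g.
Proof.
rewrite /err_pi /Mact; under eq_bigr => i _ do rewrite big_distrr.
rewrite exchange_big /=; apply: eq_bigr => j _.
by rewrite -(proj2 (proj2 Hpi) j) big_distrl /=; apply: eq_bigr => i _ /=; ring.
Qed.

Lemma err_pi_Msum m g : err_pi pi (Msum M m g) = INR m.+1 * err_pi pi g.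
Proof.
elim: m => [|m IH].
  by rewrite /= Rmult_1_l; apply: eq_bigr => i _; rewrite Msum0.
have -> : err_pi pi (Msum M m.+1 g) = err_pi pi g + err_pi pi (Mact M (Msum M m g)).
  by rewrite /err_pi -big_split; apply: eq_bigr => i _ /=; rewrite MsumS; ring.
by rewrite err_pi_Mact IH [INR m.+2]S_INR; ring.
Qed.

(* Martingale decomposition of [sum_(t <= n) g (s t)]: the head is centered under [pi],
   the [i]-th increment under the row [M x]. *)
Definition mart_head n g x := Msum M n g x - err_pi pi (Msum M n g).
Definition mart_incr n g (i : nat) x y :=
  Msum M (n - i.+1) g y - Mact M (Msum M (n - i.+1) g) x.

Lemma sum_path_mart_decomp n g (s : {ffun 'I_n.+1 -> 'I_Z}) :
  \big[Rplus/0]_(t : 'I_n.+1) g (s t) - INR n.+1 * err_pi pi g =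
  mart_head n g (s ord0) + \big[Rplus/0]_(i < n) mart_incr n g i (s (inord i)) (s (inord i.+1)).
Proof.
rewrite S_INR; set ss := fun k : nat => s (inord k).
have incrE (i : 'I_n) : mart_incr n g i (ss i) (ss i.+1) =
    (Msum M (n - i.+1) g (ss i.+1) - Msum M (n - i) g (ss i)) + g (ss i).
  by rewrite /mart_incr -(subnSK (ltn_ord i)) MsumS; ring.
rewrite (eq_bigr _ (fun i _ => incrE i)) big_split /=.
rewrite (Rsum_telescope (fun i => Msum M (n - i) g (ss i))) subnn subn0 Msum0.
rewrite (eq_bigr (fun t : 'I_n.+1 => g (ss t))) => [|t _]; last by rewrite /ss inord_val.
rewrite big_ord_recr /= /mart_head err_pi_Msum.
have -> : s ord0 = ss 0%N by rewrite /ss; congr (s _); apply: val_inj; rewrite /= inordK.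
rewrite S_INR; ring.
Qed.

Lemma path_mgf_le n g a r lam : 0 <= r -> band g a r -> 0 <= lam ->
  \big[Rplus/0]_(s : {ffun 'I_n.+1 -> 'I_Z})
     (path_prob M pi s * exp (lam * (\big[Rplus/0]_(t : 'I_n.+1) g (s t) - INR n.+1 * err_pi pi g)))
  <= exp (lam ^ 2 * (r * INR N0 / (INR Z * delta)) ^ 2 / 8) ^ n.+1.
Proof.
move=> r0 gb lam0.
have Msum_band m := band_Msum m r0 gb.
rewrite (eq_bigr (path_weight (fun x => pi x * exp (lam * mart_head n g x))
    (fun i x y => M x y * exp (lam * mart_incr n g i x y)))); last first.
  move=> s _; rewrite sum_path_mart_decomp path_prob_weight -path_weight_mul; congr Rmult.
  by rewrite /path_weight Rmult_plus_distr_l exp_plus big_distrr (big_morph _ exp_plus exp_0).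
apply: sum_path_weight_le.
- by move=> x; apply: Rmult_le_pos; [exact: (proj1 Hpi) | apply/Rlt_le/exp_pos].
- by move=> t x y; apply: Rmult_le_pos; [exact: (proj1 HM) | apply/Rlt_le/exp_pos].
- have [a' b'] := Msum_band n.
  exact: hoeffding_centered (proj1 Hpi) (proj1 (proj2 Hpi)) b' lam0.
- move=> t x; have [a' b'] := Msum_band (n - t.+1)%N.
  exact: hoeffding_centered (proj1 HM x) (proj2 HM x) b' lam0.
- exact/Rlt_le/exp_pos.
Qed.

Lemma upper_tail_le n g a r eps : 0 < r -> band g a r -> 0 <= eps ->
  prob M pi (fun s : {ffun 'I_n.+1 -> 'I_Z} => Rleb eps (err_S g s - err_pi pi g))
  <= exp (- 2 * INR n.+1 * eps ^ 2 / (r * INR N0 / (INR Z * delta)) ^ 2).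
Proof.
move=> r0 gb eps0; set rho := r * INR N0 / (INR Z * delta).
have N0R : 1 <= INR N0 by apply: (le_INR 1); apply/leP.
have rho0 : 0 < rho by apply: Rdiv_lt_0_compat; nra.
have T0 : 0 < INR n.+1 by apply: lt_0_INR; apply/ltP.
set lam := 4 * eps / rho ^ 2.
have lam0 : 0 <= lam by apply: Rdiv_le_0_compat; [lra | apply: pow_lt].
apply: (Rle_trans _ _ _ (@chernoff_le {ffun 'I_n.+1 -> 'I_Z} (path_prob M pi)
  (fun s => err_S g s - err_pi pi g) eps (lam * INR n.+1)
  (@path_prob_ge0 n) (ltac:(nra)))).
rewrite (eq_bigr (fun s => path_prob M pi s *
    exp (lam * (\big[Rplus/0]_(t : 'I_n.+1) g (s t) - INR n.+1 * err_pi pi g)))); last first.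
  by move=> s _; congr (_ * exp _); rewrite /err_S; field; lra.
apply: (Rle_trans _ _ _ (Rmult_le_compat_l _ _ _ (Rlt_le _ _ (exp_pos _))
                   (path_mgf_le n (Rlt_le _ _ r0) gb lam0))).
rewrite -/rho exp_pow -exp_plus; apply: exp_le_exp; apply: Req_le; rewrite /lam; field; lra.
Qed.

Lemma tail_le n g a r eps : 0 < r -> band g a r -> 0 <= eps ->
  prob M pi (fun s : {ffun 'I_n.+1 -> 'I_Z} => Rleb eps (Rabs (err_S g s - err_pi pi g)))
  <= 2 * exp (- 2 * INR n.+1 * eps ^ 2 / (r * INR N0 / (INR Z * delta)) ^ 2).
Proof.
move=> r0 gb eps0.
have gb' : band (fun z => - g z) (- (a + r)) r by move=> i; have := gb i; lra.
apply: (Rle_trans _ _ _ (Rsum_abs_event_le _ eps (@path_prob_ge0 n))).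
rewrite [X in _ + X](eq_bigr (fun s => if Rleb eps (err_S (fun z => - g z) s -
    err_pi pi (fun z => - g z)) then path_prob M pi s else 0)); last first.
  by move=> s _; rewrite err_S_opp err_pi_opp; congr (if Rleb eps _ then _ else _); ring.
rewrite -Rplus_diag; apply: Rplus_le_compat.
- exact: upper_tail_le r0 gb eps0.
- exact: upper_tail_le r0 gb' eps0.
Qed.

End MarkovChain.

Lemma tail_exponent_le t eps rho : 0 < t -> 0 < rho -> rho < t * eps ->
  - 2 * t * eps ^ 2 / rho ^ 2 <= - (2 * (t * eps - rho) ^ 2 / (t * rho ^ 2)).
Proof.
move=> t0 rho0 rho_lt.
have -> : - 2 * t * eps ^ 2 / rho ^ 2 = - (2 * (t * eps) ^ 2 / (t * rho ^ 2)) by field; lra.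
apply: Ropp_le_contravar; apply: Rmult_le_compat_r.
  by apply/Rlt_le/Rinv_0_lt_compat/Rmult_lt_0_compat => //; apply: pow_lt.
nra.
Qed.

Theorem theorem2
  (H Bt : finType) (N Z : nat)
  (zof : 'I_Z -> vecH H N * vecB Bt N * vecB Bt N) (zof_inj : injective zof)
  (M : 'I_Z -> 'I_Z -> R) (HM : stochastic M) (Hirr : irreducible M)
  (pi : 'I_Z -> R) (Hpi : stationary_dist M pi)
  (N0 : nat) (HN0 : (1 <= N0)%nat) (Hpos : forall i j, 0 < Mpow M N0 i j)
  (delta : R) (Hdelta_le : forall i j, delta <= Mpow M N0 i j)
  (Hdelta_att : exists i j, Mpow M N0 i j = delta)
  (f : vecH H N -> vecB Bt N -> vecB Bt N) (ell : vecB Bt N -> vecB Bt N -> R)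
  (B : R) (HB : 0 < B) (Hbound : forall z : 'I_Z, Rabs (loss f ell (zof z)) <= B)
  (eps : R) (Heps : 0 < eps) (T : nat)
  (HT : INR T > 2 * B * INR N0 / (INR Z * delta * eps)) :
  let l := fun z : 'I_Z => loss f ell (zof z) in
  prob M pi (fun s : {ffun 'I_T -> 'I_Z} => Rleb eps (Rabs (err_S l s - err_pi pi l)))
  <= 2 * exp (- (INR Z ^ 2 * delta ^ 2 * (INR T * eps - 2 * B * INR N0 / (INR Z * delta)) ^ 2)
               / (2 * INR T * B ^ 2 * INR N0 ^ 2)).
Proof.
move=> l; have [i0 [j0 delta_att]] := Hdelta_att.
have delta0 : 0 < delta by rewrite -delta_att.
have Z1 : 1 <= INR Z by apply/(le_INR 1)/leP/(leq_ltn_trans (leq0n i0) (ltn_ord i0)).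
have Zdelta_gt0 : 0 < INR Z * delta by nra.
have N0R : 1 <= INR N0 by apply/(le_INR 1)/leP.
set rho := 2 * B * INR N0 / (INR Z * delta).
have rho0 : 0 < rho by apply: Rdiv_lt_0_compat; nra.
have rho_lt : rho < INR T * eps.
  have -> : rho = 2 * B * INR N0 / (INR Z * delta * eps) * eps by rewrite /rho; field; lra.
  by apply: Rmult_lt_compat_r.
have T0 : 0 < INR T by nra.
case: T T0 HT rho_lt => [|n] T0 _ rho_lt; first by rewrite /= in T0; lra.
apply: (Rle_trans _ _ _ (tail_le HM HN0 Hdelta_le Zdelta_gt0 (Z_delta_le1 HM Hdelta_le i0)
  Hpi n (ltac:(lra) : 0 < 2 * B) (band_of_Rabs_le Hbound) (Rlt_le _ _ Heps))).
apply: Rmult_le_compat_l; first lra; apply: exp_le_exp.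
rewrite -/rho (_ : - _ / _ = - (2 * (INR n.+1 * eps - rho) ^ 2 / (INR n.+1 * rho ^ 2))).
  exact: tail_exponent_le.
by rewrite /rho; field; repeat split; lra.
Qed.
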